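(* Let $0<\alpha<\beta<1$ and $t\geq1$. Let $\mathcal{P}_t'$ be the set of real polynomials $f$ of degree at most $t$ with $f(0)=0$ and $f(1)=1$. Suppose $f^\star\in\mathcal{P}_t'$ is a minimizer of \[ \frac{\max_{\lambda\in[0,\alpha]}|f(\lambda)|}{\min_{\lambda\in[\beta,1]}|f(\lambda)|} \] over $f\in\mathcal{P}_t'$. Then $f^\star$ has no roots in the interval $[\alpha,1]$.
   Context: The objective is taken to be $+\infty$ when the denominator vanishes. *)

From HB Require Import structures.
From mathcomp Require Import all_boot all_order all_algebra.
From mathcomp Require Import all_classical all_reals.
From mathcomp Require Import ereal.
Set Implicit Arguments. Unset Strict Implicit. Unset Printing Implicit Defensive.
Import Order.TTheory GRing.Theory Num.Theory.
Local Open Scope ring_scope.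
Local Open Scope classical_set_scope.

Definition Pt' (R : realType) (t : nat) (f : {poly R}) : Prop :=
  (size f <= t.+1)%N /\ f.[0] = 0 /\ f.[1] = 1.

(* max_{lambda in [a,b]} |f(lambda)| (a sup of a continuous function on a compact interval) *)
Definition maxabs (R : realType) (a b : R) (f : {poly R}) : R :=
  sup [set `|f.[x]| | x in [set x : R | a <= x <= b]].

Definition minabs (R : realType) (a b : R) (f : {poly R}) : R :=
  inf [set `|f.[x]| | x in [set x : R | a <= x <= b]].

Definition ratio_obj (R : realType) (alpha beta : R) (f : {poly R}) : \bar R :=
  if minabs beta 1 f == 0 then +oo%E
  else (maxabs 0 alpha f / minabs beta 1 f)%:E.

From HB Require Import structures.
From mathcomp Require Import all_boot all_order all_algebra.
From mathcomp Require Import all_classical all_reals.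
From mathcomp Require Import ereal.
From mathcomp Require Import ring lra.
Import Order.TTheory GRing.Theory Num.Theory.
Local Open Scope ring_scope.

(* Comparison with X shows that the optimal denominator is positive, so a root
   x in [alpha, 1] lies in [alpha, beta). Write f = q (X - x) and move the root
   to some s < alpha, rescaling by c = (1 - x) / (1 - s) < 1 to keep the value
   1 at 1. On [beta, 1] this does not decrease |f|, since
   c (y - s) - (y - x) = (x - s)(1 - y) / (1 - s) >= 0. On [0, alpha] the new
   polynomial is at most c times the old maximum: for y <= s because
   |y - s| <= |y - x|, and for s < y <= alpha because alpha - s is chosen small
   relative to that maximum. Hence the objective strictly decreases. *)

Section Extrema.
Context {R : realType}.
Implicit Types (a b x M : R) (p : {poly R}).

Lemma maxabs_ub {a b x} p : a <= x <= b -> `|p.[x]| <= maxabs a b p.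
Proof.
move=> /andP[ax xb]; apply: sup_upper_bound; last by exists x => //; apply/andP.
split; first by exists `|p.[x]|, x => //; apply/andP.
have [ub hub] := poly_disk_bound p (`|a| + `|b|).
exists ub => _ [y /andP[ay yb] <-]; apply: hub.
have := ler_norm b; have := ler_norm (- a); rewrite normrN.
by rewrite ler_norml; have := normr_ge0 a; have := normr_ge0 b; lra.
Qed.

Lemma maxabs_le a b p M :
  a <= b -> (forall x, a <= x <= b -> `|p.[x]| <= M) -> maxabs a b p <= M.
Proof.
move=> ab pM; apply: ge_sup; first by exists `|p.[a]|, a => //=; rewrite lexx ab.
by move=> _ [x hx <-]; apply: pM.
Qed.

Lemma minabs_lb {a b x} p : a <= x <= b -> minabs a b p <= `|p.[x]|.
Proof. by move=> hx; apply: ge_inf; [exists 0 => _ [y _ <-] | exists x]. Qed.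

Lemma minabs_ge a b p M :
  a <= b -> (forall x, a <= x <= b -> M <= `|p.[x]|) -> M <= minabs a b p.
Proof.
move=> ab pM; apply: lb_le_inf; first by exists `|p.[a]|, a => //=; rewrite lexx ab.
by move=> _ [x hx <-]; apply: pM.
Qed.

Lemma minabs_ge0 a b p : a <= b -> 0 <= minabs a b p.
Proof. by move=> ab; apply: minabs_ge. Qed.

Lemma poly_eq0_on_itv {a b} p :
  a < b -> (forall x, a <= x <= b -> p.[x] = 0) -> p = 0.
Proof.
move=> ab p0; have [// | pN0] := eqVneq p 0.
pose z i := a + (b - a) / i.+1%:R.
have baN0 : b - a != 0 by rewrite subr_eq0 gt_eqF.
have zI : injective z.
  move=> i j /addrI /(mulfI baN0) /invr_inj /eqP.
  by rewrite eqr_nat => /eqP [].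
suff: (size (mkseq z (size p)) < size p)%N by rewrite size_mkseq ltnn.
apply: max_poly_roots pN0 _ (mkseq_uniq _ zI).
apply/allP => _ /mapP[i _ ->]; apply/rootP/p0.
have ba0 : 0 <= (b - a) / i.+1%:R by rewrite divr_ge0 // subr_ge0 ltW.
have : (b - a) / i.+1%:R <= b - a.
  by rewrite ler_pdivrMr ?ltr0Sn // ler_peMr ?ler1n // subr_ge0 ltW.
rewrite /z; move: ba0; move: ((b - a) / _) => d d0 dba.
by rewrite ler_wpDr //= -lerBrDl.
Qed.

Lemma maxabs_gt0 a b p : a < b -> p != 0 -> 0 < maxabs a b p.
Proof.
move=> ab pN0; rewrite lt_def (le_trans (normr_ge0 p.[a])); last first.
  by apply: maxabs_ub; rewrite lexx ltW.
rewrite andbT; apply: contra pN0 => /eqP M0; apply/eqP.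
apply: (poly_eq0_on_itv _ ab) => x hx.
by apply/normr0_eq0/eqP; rewrite eq_le normr_ge0 andbT -M0 maxabs_ub.
Qed.

End Extrema.

Lemma ratio_obj_lt {R : realType} (alpha beta c : R) (f g : {poly R}) :
  0 <= alpha -> c < 1 -> 0 < maxabs 0 alpha f -> 0 < minabs beta 1 f ->
  minabs beta 1 f <= minabs beta 1 g -> maxabs 0 alpha g <= c * maxabs 0 alpha f ->
  (ratio_obj alpha beta g < ratio_obj alpha beta f)%E.
Proof.
move=> a0 c1 Mf_gt0 mf_gt0 mfg Mg.
have mg_gt0 := lt_le_trans mf_gt0 mfg.
have Mg_ge0 : 0 <= maxabs 0 alpha g.
  by apply: le_trans (normr_ge0 g.[0]) (maxabs_ub _ _); rewrite lexx.
rewrite /ratio_obj !gt_eqF // lte_fin.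
apply: (@le_lt_trans _ _ (maxabs 0 alpha g / minabs beta 1 f)).
  by rewrite ler_wpM2l // lef_pV2 ?posrE.
by rewrite ltr_pM2r ?invr_gt0 //; apply: le_lt_trans Mg _; rewrite gtr_pMl.
Qed.

Definition move_root {R : realType} (q : {poly R}) (x s : R) : {poly R} :=
  ((1 - x) / (1 - s)) *: (q * ('X - s%:P)).

Section MoveRoot.
Context {R : realType} {q : {poly R}} {x s : R}.
Let f := q * ('X - x%:P).
Let c := (1 - x) / (1 - s).

Lemma horner_move_root y : (move_root q x s).[y] = c * (q.[y] * (y - s)).
Proof. by rewrite hornerZ hornerM hornerXsubC. Qed.

Lemma size_move_root : (size (move_root q x s) <= size f)%N.
Proof.
apply: leq_trans (size_scale_leq _ _) _; rewrite /f.
have [->|qN0] := eqVneq q 0; first by rewrite !mul0r.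
by rewrite !size_mul ?polyXsubC_eq0 // !size_XsubC.
Qed.

Lemma Pt'_move_root t : x != 0 -> s != 1 -> Pt' t f -> Pt' t (move_root q x s).
Proof.
move=> xN0 sN1 [fs [f0 f1]]; split; first exact: leq_trans size_move_root fs.
have q0 : q.[0] = 0.
  move: f0; rewrite /f hornerM hornerXsubC sub0r => /eqP.
  by rewrite mulf_eq0 oppr_eq0 (negbTE xN0) orbF => /eqP.
rewrite horner_move_root q0 mul0r mulr0; split=> //.
rewrite -[RHS]f1 horner_move_root /f hornerM hornerXsubC /c; field.
by rewrite subr_eq0 eq_sym.
Qed.

Lemma move_root_scale_ge0 : s < x -> x <= 1 -> 0 <= c.
Proof. by move=> sx x1; rewrite /c divr_ge0 ?subr_ge0 // (le_trans (ltW sx)). Qed.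

Lemma move_root_scale_lt1 : s < x -> x <= 1 -> c < 1.
Proof. by move=> sx x1; rewrite /c ltr_pdivrMr ?mul1r; lra. Qed.

Lemma minabs_move_root b : s < x -> x <= b -> b <= 1 ->
  minabs b 1 f <= minabs b 1 (move_root q x s).
Proof.
move=> sx xb b1; apply: minabs_ge => // y /andP[b_y y1].
have fy : minabs b 1 f <= `|f.[y]| by apply: minabs_lb; rewrite b_y y1.
apply: le_trans fy _.
have c_ge0 : 0 <= c by apply: move_root_scale_ge0; lra.
rewrite /f hornerM hornerXsubC horner_move_root [leRHS]normrM (ger0_norm c_ge0) !normrM.
rewrite mulrCA ler_wpM2l // !ger0_norm ?subr_ge0; try lra.
have : 0 <= (x - s) * (1 - y) by rewrite mulr_ge0 // subr_ge0; lra.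
by rewrite /c mulrAC ler_pdivlMr; [nra | lra].
Qed.

Lemma maxabs_move_root a b M : s < x -> x <= 1 -> a <= b -> b <= x ->
  (forall y, a <= y <= b -> `|q.[y]| * (b - s) <= M) ->
  maxabs a b f <= M -> maxabs a b (move_root q x s) <= c * M.
Proof.
move=> sx x1 ab bx qM fM; apply: maxabs_le => // y hy; have /andP[ay yb] := hy.
have c_ge0 := move_root_scale_ge0 sx x1.
rewrite horner_move_root normrM (ger0_norm c_ge0) ler_wpM2l // normrM.
have [ys | sy] := leP y s.
  apply: (le_trans _ fM); apply: (le_trans _ (maxabs_ub f hy)).
  by rewrite /f hornerM hornerXsubC normrM ler_wpM2l // !ler0_norm; lra.
by apply: le_trans (qM _ hy); rewrite ler_wpM2l // ger0_norm; lra.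
Qed.

End MoveRoot.

Lemma ratio_obj_lt_of_root {R : realType} {alpha beta x : R} {t f} :
  0 < alpha -> alpha <= x -> x < beta -> beta <= 1 -> Pt' t f -> f.[x] = 0 ->
  minabs beta 1 f != 0 ->
  exists2 g, Pt' t g & (ratio_obj alpha beta g < ratio_obj alpha beta f)%E.
Proof.
move=> a0 ax xb b1 Pf fx0 mfN0; have [_ [f0 f1]] := Pf.
have fN0 : f != 0 by apply: contra_eq_neq f1 => ->; rewrite horner0 eq_sym oner_neq0.
have mf_gt0 : 0 < minabs beta 1 f by rewrite lt_def mfN0 minabs_ge0.
have Mf_gt0 : 0 < maxabs 0 alpha f by exact: maxabs_gt0.
have /factor_theorem[q ef] : root f x by apply/rootP.
have [K qK] := poly_disk_bound q 1; have K_gt0 : 0 < `|K| + 1 by rewrite ltr_wpDl.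
pose s := alpha - maxabs 0 alpha f / (`|K| + 1).
have sa : s < alpha by rewrite /s ltrBlDr ltrDl divr_gt0.
have sx : s < x by lra.
have x_gt0 : 0 < x by lra.
have s_lt1 : s < 1 by lra.
exists (move_root q x s).
  by apply: Pt'_move_root; [rewrite gt_eqF | rewrite lt_eqF | rewrite -ef].
set Mf := maxabs 0 alpha f.
have qM y : 0 <= y <= alpha -> `|q.[y]| * (alpha - s) <= Mf.
  move=> /andP[y0 ya]; have qyK : `|q.[y]| <= `|K| + 1.
    by apply: le_trans (qK y _) _; [rewrite ger0_norm; lra | have := ler_norm K; lra].
  rewrite /s opprB addrC subrK mulrA ler_pdivrMr // -/Mf mulrC.
  by rewrite (ler_wpM2l (ltW Mf_gt0)).
have mfg : minabs beta 1 f <= minabs beta 1 (move_root q x s).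
  by rewrite ef; apply: minabs_move_root; lra.
have Mg : maxabs 0 alpha (move_root q x s) <= (1 - x) / (1 - s) * Mf.
  by apply: maxabs_move_root qM _; rewrite -?ef //; lra.
apply: ratio_obj_lt (ltW a0) _ Mf_gt0 mf_gt0 mfg Mg.
exact: move_root_scale_lt1 sx (le_trans (ltW xb) b1).
Qed.

Theorem lemma2 (R : realType) (alpha beta : R) (t : nat) (fstar : {poly R}) :
  0 < alpha -> alpha < beta -> beta < 1 -> (1 <= t)%N ->
  Pt' t fstar ->
  (forall g : {poly R}, Pt' t g -> (ratio_obj alpha beta fstar <= ratio_obj alpha beta g)%E) ->
  forall x : R, alpha <= x <= 1 -> fstar.[x] != 0.
Proof.
move=> a0 ab b1 t1 Pf fmin x /andP[ax x1]; apply/eqP => fx0.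
have mfN0 : minabs beta 1 fstar != 0.
  have PX : Pt' t ('X : {poly R}) by split; [rewrite size_polyX | split; rewrite hornerX].
  have mX : beta <= minabs beta 1 'X.
    by apply: minabs_ge => [|y /andP[b_y _]]; rewrite ?hornerX ?ger0_norm; lra.
  apply/eqP => mf0; move: (fmin _ PX).
  by rewrite /ratio_obj mf0 eqxx gt_eqF ?leye_eq //; lra.
have xb : x < beta.
  rewrite ltNge; apply: contra mfN0 => bx.
  have : minabs beta 1 fstar <= `|fstar.[x]| by apply: minabs_lb; rewrite bx.
  by rewrite fx0 normr0 eq_le minabs_ge0 ?(ltW b1) // andbT.
have [g Pg] := ratio_obj_lt_of_root a0 ax xb (ltW b1) Pf fx0 mfN0.
by rewrite ltNge fmin.
Qed.
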